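(* A small semicategory $A$ is exponentiable in the category $\mathbf{Semicat}$ of small semicategories and semifunctors if and only if every morphism $f$ of $A$ admits a unique binary factorization, i.e. there is exactly one composable pair $(g,h)$ of morphisms of $A$ with $f=g\cdot h$.
   Context: A semicategory consists of a directed graph $A_1\rightrightarrows A_0$ with an associative composition $A_1\times_{A_0}A_1\to A_1$ (identity morphisms are not required); a semifunctor is a graph morphism preserving composition. An object $A$ is exponentiable if the functor $(-)\times A:\mathbf{Semicat}\to\mathbf{Semicat}$ has a right adjoint. The notation $g\cdot h$ denotes the composite of the composable pair $(g,h)$. *)

Record Semicat : Type := {
  Ob : Type;
  Hom : Ob -> Ob -> Type;
  comp : forall x y z : Ob, Hom y z -> Hom x y -> Hom x z;
  comp_assoc : forall (w x y z : Ob) (k : Hom y z) (g : Hom x y) (h : Hom w x),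
      comp w y z k (comp w x y g h) = comp w x z (comp x y z k g) h
}.

Arguments Hom {_} _ _.
Arguments comp {_ _ _ _} _ _.

Record Semifunctor (C D : Semicat) : Type := {
  fobj : Ob C -> Ob D;
  fmor : forall x y : Ob C, Hom x y -> Hom (fobj x) (fobj y);
  fmor_comp : forall (x y z : Ob C) (g : Hom y z) (h : Hom x y),
      fmor x z (comp g h) = comp (fmor y z g) (fmor x y h)
}.

Arguments fobj {_ _} _ _.
Arguments fmor {_ _} _ {_ _} _.

Definition sf_comp {C D E : Semicat} (G : Semifunctor D E) (F : Semifunctor C D)
  : Semifunctor C E.
Proof.
  refine {| fobj := fun x => fobj G (fobj F x);
            fmor := fun x y f => fmor G (fmor F f) |}.
  intros x y z g h. rewrite (fmor_comp _ _ F), (fmor_comp _ _ G). reflexivity.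
Defined.

Definition prod_sc (C A : Semicat) : Semicat.
Proof.
  refine {| Ob := (Ob C * Ob A)%type;
            Hom := fun p q => (Hom (fst p) (fst q) * Hom (snd p) (snd q))%type;
            comp := fun p q r g h => (comp (fst g) (fst h), comp (snd g) (snd h)) |}.
  intros w x y z k g h. simpl. rewrite !comp_assoc. reflexivity.
Defined.

Definition prod_map_id {C D : Semicat} (A : Semicat) (G : Semifunctor C D)
  : Semifunctor (prod_sc C A) (prod_sc D A).
Proof.
  refine {| fobj := fun p : Ob (prod_sc C A) => (fobj G (fst p), snd p) : Ob (prod_sc D A);
            fmor := fun p q (f : @Hom (prod_sc C A) p q) =>
                      ((fmor G (fst f), snd f) : @Hom (prod_sc D A) (fobj G (fst p), snd p) (fobj G (fst q), snd q)) |}.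
  intros x y z g h. simpl. rewrite (fmor_comp _ _ G). reflexivity.
Defined.

(* A is exponentiable iff (-) x A : Semicat -> Semicat has a right adjoint,
   expressed by the standard pointwise form: for every B a couniversal arrow
   (B^A, ev : B^A x A -> B) from (-) x A to B. *)
Definition exponentiable (A : Semicat) : Prop :=
  forall B : Semicat,
    exists (E : Semicat) (ev : Semifunctor (prod_sc E A) B),
      forall (C : Semicat) (F : Semifunctor (prod_sc C A) B),
        exists! G : Semifunctor C E, sf_comp ev (prod_map_id A G) = F.

Definition unique_binary_factorization (A : Semicat) : Prop :=
  forall (x z : Ob A) (f : Hom x z),
    exists! p : {y : Ob A & (Hom y z * Hom x y)%type},
      f = comp (fst (projT2 p)) (snd (projT2 p)).

From Stdlib Require Import List FunctionalExtensionality ProofIrrelevance Eqdep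
  ClassicalEpsilon.
Import ListNotations.

(* Necessity: the free semicategory [Path2] on a path 0 -> 1 -> 2 is obtained by
   gluing two copies of the arrow category [Arrow] at a point, and [- x A], being a
   left adjoint, preserves this gluing.  Hence a semifunctor out of [Path2 x A] is
   determined by its two restrictions to [Arrow x A]; testing this against the
   semifunctor that marks the indecomposable arrows (0 -> 2, f) shows that every [f]
   factors.  Conversely two semifunctors [Arrow x A -> B] glue, and gluing the one
   that sends each arrow to the one-letter word of its A-component gives a
   semifunctor sending (0 -> 2, g.h) to the word [g; h], so the factorization is
   unique.
   Sufficiency: [B^A] has as objects the maps [Ob A -> Ob B] and as arrows
   [F0 -> F1] the families [A(x, y) -> B(F0 x, F1 y)]; composites are computed on
   the unique factorization, which makes the composition associative. *)

(* Arrows packed with their endpoints, so that arrows whose endpoints are only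
   propositionally equal can be compared. *)
Definition Arr (D : Semicat) := {p : (Ob D * Ob D)%type & Hom (fst p) (snd p)}.

Definition arr {D : Semicat} {x y : Ob D} (m : Hom x y) : Arr D :=
  existT (fun p : (Ob D * Ob D)%type => Hom (fst p) (snd p)) (x, y) m.

Lemma arr_inj {D : Semicat} {x y : Ob D} (m m' : Hom x y) : arr m = arr m' -> m = m'.
Proof. intro H. exact (inj_pair2 _ _ _ _ _ H). Qed.

Lemma arr_endpoints {D : Semicat} {x y x' y' : Ob D} (m : Hom x y) (m' : Hom x' y') :
  arr m = arr m' -> x = x' /\ y = y'.
Proof. intro H. apply (f_equal (@projT1 _ _)) in H. now injection H. Qed.

Lemma arr_comp {D : Semicat} {x y z x' y' z' : Ob D}
  (g : Hom y z) (h : Hom x y) (g' : Hom y' z') (h' : Hom x' y') :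
  arr g = arr g' -> arr h = arr h' -> arr (comp g h) = arr (comp g' h').
Proof.
  intros Hg Hh.
  destruct (arr_endpoints _ _ Hg) as [-> ->], (arr_endpoints _ _ Hh) as [-> _].
  apply arr_inj in Hg. apply arr_inj in Hh. now subst.
Qed.

Lemma sf_ext {C D : Semicat} (F G : Semifunctor C D) :
  (forall x, fobj F x = fobj G x) ->
  (forall x y (m : Hom x y), arr (fmor F m) = arr (fmor G m)) -> F = G.
Proof.
  destruct F as [fo fm fc], G as [go gm gc]; simpl. intros Ho Hm.
  assert (fo = go) as <- by (apply functional_extensionality; exact Ho).
  assert (fm = gm) as <-.
  { extensionality x; extensionality y; extensionality m. apply arr_inj, Hm. }
  f_equal. apply proof_irrelevance.
Qed.

Lemma sf_fobj_congr {C D : Semicat} {F G : Semifunctor C D} :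
  F = G -> forall x, fobj F x = fobj G x.
Proof. now intros ->. Qed.

Lemma sf_fmor_congr {C D : Semicat} {F G : Semifunctor C D} :
  F = G -> forall x y (m : Hom x y), arr (fmor F m) = arr (fmor G m).
Proof. now intros ->. Qed.

Lemma sf_comp_prod_map_id {A B C C' E : Semicat} (ev : Semifunctor (prod_sc E A) B)
  (G : Semifunctor C E) (H : Semifunctor C' C) :
  sf_comp ev (prod_map_id A (sf_comp G H))
  = sf_comp (sf_comp ev (prod_map_id A G)) (prod_map_id A H).
Proof. now apply sf_ext. Qed.

Definition Lists (T : Type) : Semicat :=
  {| Ob := unit; Hom := fun _ _ => list T; comp := fun _ _ _ g h => g ++ h;
     comp_assoc := fun _ _ _ _ k g h => app_assoc k g h |}.

Lemma lists_sf_ext {C : Semicat} {T : Type} (F G : Semifunctor C (Lists T)) :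
  (forall x y (m : Hom x y), (fmor F m : list T) = fmor G m) -> F = G.
Proof.
  intro Hm. apply sf_ext.
  - intro x. now destruct (fobj F x), (fobj G x).
  - intros x y m. unfold arr. simpl.
    destruct (fobj F x), (fobj F y), (fobj G x), (fobj G y). now rewrite Hm.
Qed.

Lemma lists_fmor_congr {C : Semicat} {T : Type} {F G : Semifunctor C (Lists T)} :
  F = G -> forall x y (m : Hom x y), (fmor F m : list T) = fmor G m.
Proof. now intros ->. Qed.

Definition Point : Semicat :=
  {| Ob := unit; Hom := fun _ _ => Empty_set; comp := fun _ _ _ g _ => match g with end;
     comp_assoc := fun _ _ _ _ k _ _ => match k with end |}.

Definition point_sf {E : Semicat} (o : Ob E) : Semifunctor Point E.
Proof.
  refine (Build_Semifunctor Point E (fun _ => o)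
            (fun _ _ e => Empty_set_rect (fun _ => Hom o o) e) _).
  intros x y z g. destruct g.
Defined.

Definition arrow_hom (x y : bool) : Type :=
  if x then Empty_set else if y then unit else Empty_set.

Definition arrow_comp (x y z : bool) (g : arrow_hom y z) (h : arrow_hom x y)
  : arrow_hom x z.
Proof. destruct y; [destruct g | destruct x; destruct h]. Defined.

Definition Arrow : Semicat.
Proof.
  refine (Build_Semicat bool arrow_hom arrow_comp _).
  intros w x y z k g h. destruct x; [destruct g | destruct w; destruct h].
Defined.

Definition arrow_sf {E : Semicat} {o0 o1 : Ob E} (m : Hom o0 o1) : Semifunctor Arrow E.
Proof.
  unshelve refine (Build_Semifunctor Arrow E (fun b : bool => if b then o1 else o0)
            (fun x y e => _) _).
  - destruct x; [destruct e|]. destruct y; [exact m | destruct e].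
  - intros x y z g h. destruct y; [destruct g | destruct x; destruct h].
Defined.

Lemma arrow_sf_eta {E : Semicat} (H : Semifunctor Arrow E) :
  H = arrow_sf (@fmor _ _ H false true tt).
Proof.
  apply sf_ext.
  - now intros [].
  - intros [] [] m; destruct m; reflexivity.
Qed.

Inductive vertex3 : Type := v0 | v1 | v2.

Definition path2_hom (p q : vertex3) : Type :=
  match p, q with v0, v1 | v1, v2 | v0, v2 => unit | _, _ => Empty_set end.

Definition path2_comp (p q r : vertex3) (g : path2_hom q r) (h : path2_hom p q)
  : path2_hom p r.
Proof. destruct p, q, r; simpl in *; solve [exact tt | destruct g | destruct h]. Defined.

Definition Path2 : Semicat.
Proof.
  refine (Build_Semicat vertex3 path2_hom path2_comp _).
  intros w x y z k g h.
  destruct w, x, y, z; simpl in *; solve [destruct k | destruct g | destruct h].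
Defined.

Definition path2_sf {E : Semicat} {o0 o1 o2 : Ob E} (m1 : Hom o0 o1) (m2 : Hom o1 o2)
  : Semifunctor Path2 E.
Proof.
  unshelve refine (Build_Semifunctor Path2 E
            (fun p => match p with v0 => o0 | v1 => o1 | v2 => o2 end)
            (fun p q e => _) _).
  - destruct p, q; simpl in *; first [exact m1 | exact m2 | exact (comp m2 m1) | destruct e].
  - intros p q r g h. destruct p, q, r; simpl in *; solve [destruct g | destruct h | reflexivity].
Defined.

Definition first_arrow : Semifunctor Arrow Path2 := arrow_sf (tt : @Hom Path2 v0 v1).
Definition second_arrow : Semifunctor Arrow Path2 := arrow_sf (tt : @Hom Path2 v1 v2).

Lemma path2_sf_first {E : Semicat} {o0 o1 o2 : Ob E} (m1 : Hom o0 o1) (m2 : Hom o1 o2) :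
  sf_comp (path2_sf m1 m2) first_arrow = arrow_sf m1.
Proof. apply sf_ext; [now intros [] | intros [] [] m; now destruct m]. Qed.

Lemma path2_sf_second {E : Semicat} {o0 o1 o2 : Ob E} (m1 : Hom o0 o1) (m2 : Hom o1 o2) :
  sf_comp (path2_sf m1 m2) second_arrow = arrow_sf m2.
Proof. apply sf_ext; [now intros [] | intros [] [] m; now destruct m]. Qed.

Lemma path2_glue {E : Semicat} (Ga Gb : Semifunctor Arrow E) :
  fobj Ga true = fobj Gb false ->
  exists G, sf_comp G first_arrow = Ga /\ sf_comp G second_arrow = Gb.
Proof.
  intro e. rewrite (arrow_sf_eta Ga), (arrow_sf_eta Gb). revert e.
  generalize (@fmor _ _ Ga false true tt) (@fmor _ _ Gb false true tt).
  generalize (fobj Ga true) (fobj Gb false).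
  intros o1 o1' m1 m2 e. subst o1'.
  exists (path2_sf m1 m2). split; [apply path2_sf_first | apply path2_sf_second].
Qed.

Lemma path2_ext {E : Semicat} (G1 G2 : Semifunctor Path2 E) :
  sf_comp G1 first_arrow = sf_comp G2 first_arrow ->
  sf_comp G1 second_arrow = sf_comp G2 second_arrow -> G1 = G2.
Proof.
  intros H1 H2. apply sf_ext.
  - intros []; [exact (sf_fobj_congr H1 false) | exact (sf_fobj_congr H1 true)
                | exact (sf_fobj_congr H2 true)].
  - intros [] [] m; destruct m.
    + exact (sf_fmor_congr H1 false true tt).
    + rewrite !(fmor_comp Path2 E _ v0 v1 v2 tt tt).
      apply arr_comp; [exact (sf_fmor_congr H2 false true tt)
                      | exact (sf_fmor_congr H1 false true tt)].
    + exact (sf_fmor_congr H2 false true tt).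
Qed.

Section Exponential.

Variables (A B E : Semicat) (ev : Semifunctor (prod_sc E A) B).

Hypothesis ev_universal : forall (C : Semicat) (F : Semifunctor (prod_sc C A) B),
  exists! G : Semifunctor C E, sf_comp ev (prod_map_id A G) = F.

Lemma transpose_inj {C : Semicat} (G1 G2 : Semifunctor C E) :
  sf_comp ev (prod_map_id A G1) = sf_comp ev (prod_map_id A G2) -> G1 = G2.
Proof.
  intro H. destruct (ev_universal C (sf_comp ev (prod_map_id A G2))) as [G [_ HG]].
  now rewrite <- (HG G1 H), <- (HG G2 eq_refl).
Qed.

Lemma path2_prod_ext (F1 F2 : Semifunctor (prod_sc Path2 A) B) :
  sf_comp F1 (prod_map_id A first_arrow) = sf_comp F2 (prod_map_id A first_arrow) ->
  sf_comp F1 (prod_map_id A second_arrow) = sf_comp F2 (prod_map_id A second_arrow) ->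
  F1 = F2.
Proof.
  intros Hfirst Hsecond.
  destruct (ev_universal _ F1) as [G1 [HG1 _]], (ev_universal _ F2) as [G2 [HG2 _]].
  assert (G1 = G2) as G12.
  { apply path2_ext; apply transpose_inj;
      now rewrite !sf_comp_prod_map_id, HG1, HG2. }
  now rewrite <- HG1, <- HG2, G12.
Qed.

Lemma path2_prod_glue (Fa Fb : Semifunctor (prod_sc Arrow A) B) :
  (forall a, fobj Fa (true, a) = fobj Fb (false, a)) ->
  exists F : Semifunctor (prod_sc Path2 A) B,
    sf_comp F (prod_map_id A first_arrow) = Fa /\
    sf_comp F (prod_map_id A second_arrow) = Fb.
Proof.
  intro Hobj.
  destruct (ev_universal _ Fa) as [Ga [HGa _]], (ev_universal _ Fb) as [Gb [HGb _]].
  assert (sf_comp Ga (@point_sf Arrow true) = sf_comp Gb (@point_sf Arrow false)) as Hpoint.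
  { apply transpose_inj. rewrite !sf_comp_prod_map_id, HGa, HGb.
    apply sf_ext; [intros [[] a]; apply Hobj | intros _ _ [[] _]]. }
  destruct (path2_glue Ga Gb (sf_fobj_congr Hpoint tt)) as [G [Hfirst Hsecond]].
  exists (sf_comp ev (prod_map_id A G)).
  now rewrite <- !sf_comp_prod_map_id, Hfirst, Hsecond.
Qed.

End Exponential.

Definition factorizable {A : Semicat} {x z : Ob A} (f : Hom x z) : Prop :=
  exists y (g : Hom y z) (h : Hom x y), f = comp g h.

Definition spans_path2 (p q : vertex3) : bool :=
  match p, q with v0, v2 => true | _, _ => false end.

Definition empty_word_sf (C : Semicat) (T : Type) : Semifunctor C (Lists T) :=
  Build_Semifunctor C (Lists T) (fun _ => tt) (fun _ _ _ => [])
    (fun _ _ _ _ _ => eq_refl).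

(* Marks the arrows [(v0 -> v2, f)] of [Path2 x A] with [f] indecomposable; it is
   a semifunctor because these arrows are neither composites nor composable. *)
Definition indecomposable_sf (A : Semicat) : Semifunctor (prod_sc Path2 A) (Lists unit).
Proof.
  refine (Build_Semifunctor (prod_sc Path2 A) (Lists unit) (fun _ => tt)
            (fun p q m => if spans_path2 (fst p) (fst q) then
                            if excluded_middle_informative (factorizable (snd m))
                            then [] else [tt]
                          else []) _).
  intros [p a] [q b] [r c] [g1 g2] [h1 h2]. simpl.
  destruct p, q, r; simpl in *; try solve [destruct g1 | destruct h1 | reflexivity].
  destruct (excluded_middle_informative _) as [_ | Hnot]; [reflexivity |].
  exfalso. apply Hnot. now exists b, g2, h2.
Defined.

Definition letter_sf (A : Semicat) : Semifunctor (prod_sc Arrow A) (Lists (Arr A)).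
Proof.
  refine (Build_Semifunctor (prod_sc Arrow A) (Lists (Arr A)) (fun _ => tt)
            (fun p q m => [arr (snd m)]) _).
  intros [p a] [q b] [r c] [g1 g2] [h1 h2].
  destruct q; [destruct g1 | destruct p; destruct h1].
Defined.

Section Necessity.

Variables (A : Semicat) (HA : exponentiable A).

Lemma exponentiable_factorizable {x z : Ob A} (f : Hom x z) : factorizable f.
Proof.
  destruct (excluded_middle_informative (factorizable f)) as [| Hf]; [assumption | exfalso].
  destruct (HA (Lists unit)) as [E [ev ev_universal]].
  assert (empty_word_sf _ _ = indecomposable_sf A) as Hempty.
  { apply (path2_prod_ext A _ E ev ev_universal); apply lists_sf_ext;
      intros [[] a] [[] b] [[] g]; reflexivity. }
  generalize (lists_fmor_congr Hempty (v0, x) (v2, z) (tt, f)). simpl.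
  destruct (excluded_middle_informative _); [contradiction | discriminate].
Qed.

Lemma exponentiable_factorization_unique {x y y' z : Ob A}
  (g : Hom y z) (h : Hom x y) (g' : Hom y' z) (h' : Hom x y') :
  comp g h = comp g' h' ->
  existT (fun y => (Hom y z * Hom x y)%type) y (g, h) = existT _ y' (g', h').
Proof.
  intro Heq.
  destruct (HA (Lists (Arr A))) as [E [ev ev_universal]].
  destruct (path2_prod_glue A _ E ev ev_universal (letter_sf A) (letter_sf A)
              (fun _ => eq_refl)) as [F [Hfirst Hsecond]].
  assert (word : forall y0 (g0 : Hom y0 z) (h0 : Hom x y0),
             (@fmor _ _ F (v0, x) (v2, z) (tt, comp g0 h0) : list _) = [arr g0; arr h0]).
  { intros y0 g0 h0.
    change (tt, comp g0 h0)
      with (@comp (prod_sc Path2 A) (v0, x) (v1, y0) (v2, z) (tt, g0) (tt, h0)).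
    rewrite fmor_comp.
    exact (f_equal2 (@app _) (lists_fmor_congr Hsecond (false, y0) (true, z) (tt, g0))
                             (lists_fmor_congr Hfirst (false, x) (true, y0) (tt, h0))). }
  assert ([arr g; arr h] = [arr g'; arr h']) as Hwords
    by (rewrite <- !word, Heq; reflexivity).
  assert (arr g = arr g') as Hg by exact (f_equal (hd (arr g)) Hwords).
  assert (arr h = arr h') as Hh by exact (f_equal (fun l => hd (arr h) (tl l)) Hwords).
  destruct (arr_endpoints _ _ Hh) as [_ <-].
  apply arr_inj in Hg, Hh. now subst.
Qed.

Lemma exponentiable_unique_binary_factorization : unique_binary_factorization A.
Proof.
  intros x z f.
  destruct (exponentiable_factorizable f) as (y & g & h & ->).
  exists (existT _ y (g, h)). split; [reflexivity |].
  intros [y' [g' h']] Heq. exact (exponentiable_factorization_unique g h g' h' Heq).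
Qed.

End Necessity.

Section Sufficiency.

Variables (A : Semicat) (ubf : unique_binary_factorization A).

Definition factorization {x z : Ob A} (f : Hom x z) : {y : Ob A & (Hom y z * Hom x y)%type} :=
  proj1_sig (constructive_indefinite_description _ (ubf x z f)).

Lemma factorization_eq {x y z : Ob A} (f : Hom x z) (g : Hom y z) (h : Hom x y) :
  f = comp g h -> factorization f = existT _ y (g, h).
Proof.
  intro Hf. unfold factorization.
  destruct (constructive_indefinite_description _ _) as [p Hp]; simpl.
  exact (proj2 Hp (existT _ y (g, h)) Hf).
Qed.

Variable B : Semicat.

Definition exp_hom (F0 F1 : Ob A -> Ob B) : Type :=
  forall x y : Ob A, Hom x y -> Hom (F0 x) (F1 y).

Definition exp_comp (F0 F1 F2 : Ob A -> Ob B) (psi : exp_hom F1 F2) (phi : exp_hom F0 F1)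
  : exp_hom F0 F2 :=
  fun x z f => match factorization f with
               | existT _ y (g, h) => comp (psi y z g) (phi x y h)
               end.

Lemma exp_comp_factor {F0 F1 F2 : Ob A -> Ob B} (psi : exp_hom F1 F2) (phi : exp_hom F0 F1)
  {x y z : Ob A} (f : Hom x z) (g : Hom y z) (h : Hom x y) :
  f = comp g h -> exp_comp F0 F1 F2 psi phi x z f = comp (psi y z g) (phi x y h).
Proof. intro Hf. unfold exp_comp. now rewrite (factorization_eq f g h Hf). Qed.

Lemma exp_comp_assoc (F0 F1 F2 F3 : Ob A -> Ob B)
  (chi : exp_hom F2 F3) (psi : exp_hom F1 F2) (phi : exp_hom F0 F1) :
  exp_comp F0 F2 F3 chi (exp_comp F0 F1 F2 psi phi)
  = exp_comp F0 F1 F3 (exp_comp F1 F2 F3 chi psi) phi.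
Proof.
  extensionality x; extensionality z; extensionality f.
  destruct (ubf x z f) as [[y [g h]] [Hf _]].
  destruct (ubf x y h) as [[y' [g' h']] [Hh _]]. simpl in Hf, Hh.
  assert (Hf' : f = comp (comp g g') h') by now rewrite Hf, Hh, comp_assoc.
  rewrite (exp_comp_factor chi _ f g h Hf), (exp_comp_factor psi phi h g' h' Hh),
    (exp_comp_factor _ phi f (comp g g') h' Hf'),
    (exp_comp_factor chi psi (comp g g') g g' eq_refl).
  apply comp_assoc.
Qed.

Definition Exp : Semicat := Build_Semicat (Ob A -> Ob B) exp_hom exp_comp exp_comp_assoc.

Definition eval : Semifunctor (prod_sc Exp A) B.
Proof.
  refine (Build_Semifunctor (prod_sc Exp A) B (fun p => fst p (snd p))
            (fun p q m => fst m (snd p) (snd q) (snd m)) _).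
  intros [F0 x] [F1 y] [F2 z] [psi g] [phi h].
  now apply exp_comp_factor.
Defined.

Definition curry {C : Semicat} (F : Semifunctor (prod_sc C A) B) : Semifunctor C Exp.
Proof.
  refine (Build_Semifunctor C Exp (fun c x => fobj F (c, x))
            (fun c c' k x y f => @fmor _ _ F (c, x) (c', y) (k, f)) _).
  intros c1 c2 c3 k' k.
  extensionality x; extensionality z; extensionality f.
  destruct (ubf x z f) as [[y [g h]] [Hf _]]. simpl in Hf.
  rewrite (exp_comp_factor _ _ f g h Hf). subst f.
  exact (fmor_comp _ _ F (c1, x) (c2, y) (c3, z) (k', g) (k, h)).
Defined.

Lemma curry_eval {C : Semicat} (G : Semifunctor C Exp) :
  curry (sf_comp eval (prod_map_id A G)) = G.
Proof. now apply sf_ext. Qed.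

Lemma eval_universal (C : Semicat) (F : Semifunctor (prod_sc C A) B) :
  exists! G : Semifunctor C Exp, sf_comp eval (prod_map_id A G) = F.
Proof.
  exists (curry F). split.
  - apply sf_ext; [now intros [c x] | now intros [c x] [c' y] [k f]].
  - intros G HG. rewrite <- HG. apply curry_eval.
Qed.

End Sufficiency.

Lemma unique_binary_factorization_exponentiable (A : Semicat) :
  unique_binary_factorization A -> exponentiable A.
Proof.
  intros ubf B. exists (Exp A ubf B), (eval A ubf B). exact (eval_universal A ubf B).
Qed.

Theorem proposition3p7 (A : Semicat) :
  exponentiable A <-> unique_binary_factorization A.
Proof.
  split.
  - apply exponentiable_unique_binary_factorization.
  - apply unique_binary_factorization_exponentiable.
Qed.
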